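(* Let $\tau$ be a vocabulary. Every $\Pi^1_1\text{-}\mathrm{KROM}^r(\tau)$ formula $\Phi$ is equivalent (on all finite $\tau$-structures) to a first-order $\tau$-formula of the form $\forall \bar{x}\,\varphi$, where $\varphi$ is a quantifier-free formula in conjunctive normal form (whose literals are atomic or negated atomic $\tau$-formulas, equality included).
   Context: All structures are finite; every vocabulary contains equality. For a vocabulary $\tau$, an SO-KROM$^r(\tau)$ formula is a second-order formula of the form $Q_1R_1\cdots Q_mR_m\forall\bar{x}(C_1\wedge\cdots\wedge C_n)$, where each $Q_i\in\{\forall,\exists\}$, $R_1,\dots,R_m$ are second-order relation variables, and each clause $C_j$ is a disjunction $\beta_1\vee\cdots\vee\beta_q\vee H_1\vee H_2$ in which each $\beta_s$ is an atomic or negated atomic $\tau$-formula $P\bar{y}$ or $\neg P\bar{y}$ ($P\in\tau$, including equality), and each $H_t$ is one of $R_i\bar{z}$, $\neg R_i\bar{z}$, $\exists z_1\cdots\exists z_{r}R_i z_1\dots z_r$ (with $r$ the arity of $R_i$, $1\le i\le m$), or $\bot$. (If the third option is disallowed, the logic is SO-KROM, second-order Krom logic.) $\Sigma^1_k\text{-}\mathrm{KROM}^r$ (resp. $\Pi^1_k\text{-}\mathrm{KROM}^r$) is the set of SO-KROM$^r$ formulas whose second-order quantifier prefix starts with an existential (resp. universal) quantifier and has exactly $k-1$ alternations between blocks of existential and universal quantifiers; similarly $\Sigma^1_k$-KROM, $\Pi^1_k$-KROM for SO-KROM. *)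

From Stdlib Require List.
From mathcomp Require Import all_boot.
Set Implicit Arguments. Unset Strict Implicit. Unset Printing Implicit Defensive.

(* A relational vocabulary: relation symbols with arities (equality is built in). *)
Record vocab := Vocab { sym : Type; ar : sym -> nat }.

(* First-order variables are natural numbers. *)

Inductive tlit (V : vocab) : Type :=
| TPos (P : sym V) (xs : (ar P).-tuple nat)
| TNeg (P : sym V) (xs : (ar P).-tuple nat)
| TEq  (x y : nat)
| TNeq (x y : nat).

(* The H-literals: R_i z, ~ R_i z, exists z1..zr R_i z1..zr, bottom.
   Second-order variables R_i are indexed by their position i (from 0)
   in the quantifier prefix. *)
Inductive hlit : Type :=
| HPos (i : nat) (zs : seq nat)
| HNeg (i : nat) (zs : seq nat)
| HEx  (i : nat)
| HBot.

(* clause  beta_1 \/ ... \/ beta_q \/ H1 \/ H2 *)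
Definition clause (V : vocab) := (seq (tlit V) * hlit * hlit)%type.

(* SO-KROM^r formula Q1 R1 ... Qm Rm forall xbar (C1 /\ ... /\ Cn).
   prefix : list of (quantifier, arity), quantifier true = forall, false = exists.
   The first-order block forall xbar universally closes all variables
   occurring in the clauses. *)
Record sokrom (V : vocab) := SOKrom {
  prefix  : seq (bool * nat);
  clauses : seq (clause V) }.

Definition hlit_wf (pref : seq (bool * nat)) (h : hlit) : Prop :=
  match h with
  | HPos i zs | HNeg i zs => i < size pref /\ size zs = (nth (true, 0) pref i).2
  | HEx i => i < size pref
  | HBot => True
  end.

Definition sokrom_wf (V : vocab) (F : sokrom V) : Prop :=
  forall c, List.In c (clauses F) ->
    hlit_wf (prefix F) c.1.2 /\ hlit_wf (prefix F) c.2.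

(* Pi^1_1: prefix starts with a universal quantifier and has no alternation,
   i.e. it is nonempty and consists of universal quantifiers only. *)
Definition is_Pi11 (V : vocab) (F : sokrom V) : Prop :=
  prefix F <> [::] /\ all fst (prefix F).

Definition interp (V : vocab) (A : Type) := forall P : sym V, (ar P).-tuple A -> bool.

Definition tlit_sem (V : vocab) (A : Type) (I : interp V A) (s : nat -> A)
    (l : tlit V) : Prop :=
  match l with
  | TPos P xs => I P (map_tuple s xs)
  | TNeg P xs => ~~ I P (map_tuple s xs)
  | TEq x y => s x = s y
  | TNeq x y => s x <> s y
  end.

Definition Rel (A : Type) := {r : nat & r.-tuple A -> bool}.
Definition rel0 (A : Type) : Rel A := existT _ 0 (fun _ => false).

Definition hlit_sem (A : Type) (env : seq (Rel A)) (s : nat -> A) (h : hlit) : Prop :=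
  match h with
  | HPos i zs => exists t : (projT1 (nth (rel0 A) env i)).-tuple A,
                   val t = map s zs /\ projT2 (nth (rel0 A) env i) t
  | HNeg i zs => exists t : (projT1 (nth (rel0 A) env i)).-tuple A,
                   val t = map s zs /\ ~~ projT2 (nth (rel0 A) env i) t
  | HEx i => exists t : (projT1 (nth (rel0 A) env i)).-tuple A,
                   projT2 (nth (rel0 A) env i) t
  | HBot => False
  end.

Definition clause_sem (V : vocab) (A : Type) (I : interp V A) (env : seq (Rel A))
    (s : nat -> A) (c : clause V) : Prop :=
  (exists l, List.In l c.1.1 /\ tlit_sem I s l) \/
  hlit_sem env s c.1.2 \/ hlit_sem env s c.2.

Definition matrix_sem (V : vocab) (A : Type) (I : interp V A) (cs : seq (clause V))
    (env : seq (Rel A)) : Prop :=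
  forall s : nat -> A, forall c, List.In c cs -> clause_sem I env s c.

Fixpoint prefix_sem (V : vocab) (A : Type) (I : interp V A) (cs : seq (clause V))
    (pref : seq (bool * nat)) (env : seq (Rel A)) : Prop :=
  match pref with
  | [::] => matrix_sem I cs env
  | (q, r) :: p =>
      if q then forall R : r.-tuple A -> bool,
                  prefix_sem I cs p (rcons env (existT _ r R))
      else exists R : r.-tuple A -> bool,
                  prefix_sem I cs p (rcons env (existT _ r R))
  end.

Definition sokrom_sat (V : vocab) (A : Type) (I : interp V A) (F : sokrom V) : Prop :=
  prefix_sem I (clauses F) (prefix F) [::].

(* First-order formula  forall xbar phi  with phi a CNF of tau-literals
   (the universal block closes all variables of phi). *)
Definition cnf (V : vocab) := seq (seq (tlit V)).

Definition cnf_sat (V : vocab) (A : Type) (I : interp V A) (phi : cnf V) : Prop :=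
  forall s : nat -> A, forall C, List.In C phi -> exists l, List.In l C /\ tlit_sem I s l.

(* A Pi^1_1-KROM^r formula  forall R_1 .. R_m forall xbar (C_1 /\ .. /\ C_n)  holds
   iff for every assignment s of the first-order variables and every clause
   C = beta \/ H1 \/ H2, either s satisfies beta or H1 \/ H2 holds at s for EVERY
   choice of the relations R_i (the universal quantifiers commute and beta does
   not mention any R_i).  The heart of the proof is a syntactic description of
   when H1 \/ H2 is forced at s:
   - ~R_i z \/ exists R_i : always (if R_i s(z) fails, ~R_i z holds);
   - R_i z \/ ~R_i z'     : exactly when s(z) = s(z'), a conjunction of equalities;
   - any other pair        : never; a single countermodel, in which R_k holds only
                             at the tuples named by negative literals of the pair,
                             falsifies both literals.
   Each clause thus becomes the CNF  /\_j (beta \/ z_j = z'_j)  (resp. [beta], resp.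
   nothing), and Phi is equivalent to  forall xbar  of the union of these CNFs. *)

From mathcomp Require Import all_boot.
From Stdlib Require Import Classical.
Set Implicit Arguments. Unset Strict Implicit. Unset Printing Implicit Defensive.

Section Environments.
Variable A : Type.

Fixpoint env_fits (p : seq (bool * nat)) (env : seq (Rel A)) : Prop :=
  match p, env with
  | [::], [::] => True
  | (_, r) :: p', e :: env' => projT1 e = r /\ env_fits p' env'
  | _, _ => False
  end.

Lemma env_fits_nth p env i : env_fits p env -> i < size p ->
  projT1 (nth (rel0 A) env i) = (nth (true, 0) p i).2.
Proof.
elim: p env i => [|[q r] p IH] [|e env] [|i] //=; first by case.
by case=> _ /IH; apply.
Qed.

Lemma universal_prefix_sem (V : vocab) (I : interp V A) cs p env0 :
  all fst p ->
  (prefix_sem I cs p env0 <->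
   forall env, env_fits p env -> matrix_sem I cs (env0 ++ env)).
Proof.
elim: p env0 => [|[q r] p IH] env0 /=.
  split=> [Hm [|] //|Hm]; first by rewrite cats0.
  by have := Hm [::] Logic.I; rewrite cats0.
case/andP=> /= -> Hp; split.
- move=> H [|[r' R] env] //= [/= Er Hfit]; subst r'.
  by have /(IH _ Hp)/(_ env Hfit) := H R; rewrite cat_rcons.
- move=> H R; apply/(IH _ Hp) => env Hfit; rewrite cat_rcons; exact: H.
Qed.

Fixpoint env_of (g : nat -> seq A -> bool) (p : seq (bool * nat)) (k : nat) :
    seq (Rel A) :=
  match p with
  | [::] => [::]
  | (_, r) :: p' => existT _ r (fun t : r.-tuple A => g k (val t)) :: env_of g p' k.+1
  end.

Lemma env_of_fits g p k : env_fits p (env_of g p k).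
Proof. by elim: p k => [|[q r] p IH] k //=; split. Qed.

Lemma nth_env_of g p k i : i < size p ->
  nth (rel0 A) (env_of g p k) i =
  existT _ (nth (true, 0) p i).2 (fun t => g (k + i) (val t)).
Proof.
elim: p k i => [|[q r] p IH] k [|i] //= Hi; first by rewrite addn0.
by rewrite IH // addSnnS.
Qed.

Definition hlit_val (g : nat -> seq A -> bool) (p : seq (bool * nat)) (s : nat -> A)
    (h : hlit) : Prop :=
  match h with
  | HPos i zs => g i (map s zs)
  | HNeg i zs => ~~ g i (map s zs)
  | HEx i => exists2 t : seq A, size t = (nth (true, 0) p i).2 & g i t
  | HBot => False
  end.

Lemma hlit_sem_env_of g p s h : hlit_wf p h ->
  hlit_sem (env_of g p 0) s h <-> hlit_val g p s h.
Proof.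
case: h => [i zs|i zs|i|] //=; last first.
  move=> Hi; rewrite nth_env_of //= add0n.
  split=> [[t Ht]|[t /eqP Hsize Ht]]; last by exists (Tuple Hsize).
  by exists (val t); rewrite ?size_tuple.
all: move=> [Hi Hz]; rewrite nth_env_of //= add0n.
all: have Hsize : size (map s zs) == (nth (true, 0) p i).2 by rewrite size_map Hz.
all: by split=> [[t [-> Ht]] //|Ht]; exists (Tuple Hsize).
Qed.

Lemma hlit_sem_neg p (env : seq (Rel A)) s i zs :
  env_fits p env -> hlit_wf p (HNeg i zs) ->
  hlit_sem env s (HNeg i zs) <-> ~ hlit_sem env s (HPos i zs).
Proof.
move=> Hfit [Hi Hz] /=; have := env_fits_nth Hfit Hi.
case: (nth (rel0 A) env i) => r R /= Er.
have Hs : size (map s zs) == r by rewrite size_map Hz Er.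
split=> [[t [Et HR]] [u [Eu HRu]]|Hnot].
- have Etu : t = u by apply: val_inj; rewrite /= Et Eu.
  by rewrite Etu HRu in HR.
- exists (Tuple Hs); split=> //; apply/negP=> HR.
  by apply: Hnot; exists (Tuple Hs).
Qed.

Lemma hlit_sem_pos_or_neg p (env : seq (Rel A)) s i zs :
  env_fits p env -> hlit_wf p (HNeg i zs) ->
  hlit_sem env s (HPos i zs) \/ hlit_sem env s (HNeg i zs).
Proof.
move=> Hfit Hwf; rewrite (hlit_sem_neg s Hfit Hwf); exact: classic.
Qed.

End Environments.

Definition hpair_eqs (h1 h2 : hlit) : option (seq (nat * nat)) :=
  match h1, h2 with
  | HNeg i _, HEx j | HEx j, HNeg i _ => if i == j then Some [::] else None
  | HPos i zs, HNeg j zs' | HNeg j zs', HPos i zs =>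
      if i == j then Some (zip zs zs') else None
  | _, _ => None
  end.

Definition eqs_hold (A : Type) (s : nat -> A) (eqs : seq (nat * nat)) : Prop :=
  forall q, List.In q eqs -> s q.1 = s q.2.

Definition hpair_forced (A : Type) (s : nat -> A) (h1 h2 : hlit) : Prop :=
  if hpair_eqs h1 h2 is Some eqs then eqs_hold s eqs else False.

Lemma eqs_hold_zip (A : Type) (s : nat -> A) zs zs' : size zs = size zs' ->
  eqs_hold s (zip zs zs') <-> map s zs = map s zs'.
Proof.
elim: zs zs' => [|x zs IH] [|y zs'] //=; first by split=> // _ [].
move=> [Hsize]; split.
- move=> H; have -> : s x = s y by apply: (H (x, y)); left.
  by congr (_ :: _); apply/(IH _ Hsize) => q Hq; apply: H; right.
- by case=> Exy /(IH _ Hsize) H q [<-|/H].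
Qed.

Lemma hpair_forced_sound (A : Type) p (env : seq (Rel A)) s h1 h2 :
  env_fits p env -> hlit_wf p h1 -> hlit_wf p h2 -> hpair_forced s h1 h2 ->
  hlit_sem env s h1 \/ hlit_sem env s h2.
Proof.
move=> Hfit; rewrite /hpair_forced.
case: h1 h2 => [i zs|i zs|i|] [j zs'|j zs'|j|] //=; case: eqP => // <- W1 W2.
- move=> /(eqs_hold_zip s (etrans W1.2 (esym W2.2))) ->.
  exact: hlit_sem_pos_or_neg Hfit W2.
- move=> /(eqs_hold_zip s (etrans W2.2 (esym W1.2))) ->.
  by apply/or_comm; apply: hlit_sem_pos_or_neg Hfit W1.
- move=> _; case: (hlit_sem_pos_or_neg s Hfit W1) => [[t [_ Ht]]|Hneg].
  + by right; exists t.
  + by left.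
- move=> _; case: (hlit_sem_pos_or_neg s Hfit W2) => [[t [_ Ht]]|Hneg].
  + by left; exists t.
  + by right.
Qed.

Lemma hpair_eqsC h1 h2 : hpair_eqs h1 h2 = hpair_eqs h2 h1.
Proof. by case: h1 h2 => [i zs|i zs|i|] [j zs'|j zs'|j|]. Qed.

Definition neg_at (A : eqType) (s : nat -> A) (h : hlit) (k : nat) (t : seq A) : bool :=
  if h is HNeg i zs then (k == i) && (t == map s zs) else false.

Lemma neg_at_model_forced (A : eqType) p s (g : nat -> seq A -> bool) h h' :
  (forall k t, g k t = neg_at s h k t || neg_at s h' k t) ->
  hlit_wf p h -> hlit_wf p h' -> hlit_val g p s h -> hpair_forced s h h'.
Proof.
rewrite /hpair_forced; case: h => [i zs|i zs|i|] Eg W W' //=.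
- rewrite Eg /=; case: h' {Eg} W' => [j zs'|j zs'|j|] //= W' /andP[/eqP Eij /eqP Em].
  subst j; rewrite eqxx; exact: (proj2 (eqs_hold_zip s (etrans W.2 (esym W'.2))) Em).
- by rewrite Eg /= !eqxx.
- case=> t _; rewrite Eg /=; case: h' {Eg} W' => [j zs'|j zs'|j|] //= _.
  by case/andP=> /eqP -> _; rewrite eqxx => q [].
Qed.

(* Completeness: an unforced pair is refuted by the environment in which R_k holds
   exactly at the tuples named by negative literals of the pair. *)
Lemma hpair_refuted (A : eqType) p s h1 h2 :
  hlit_wf p h1 -> hlit_wf p h2 -> ~ hpair_forced s h1 h2 ->
  exists2 env : seq (Rel A), env_fits p env &
    ~ (hlit_sem env s h1 \/ hlit_sem env s h2).
Proof.
move=> W1 W2 Hunforced.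
pose g k t := neg_at s h1 k t || neg_at s h2 k t.
exists (env_of g p 0); first exact: env_of_fits.
rewrite !hlit_sem_env_of //; case=> Hval; apply: Hunforced.
- exact: neg_at_model_forced Hval.
- rewrite /hpair_forced hpair_eqsC.
  by apply: (neg_at_model_forced (g := g)) Hval => // k t; rewrite orbC.
Qed.

Lemma hpair_valid (A : eqType) p s h1 h2 : hlit_wf p h1 -> hlit_wf p h2 ->
  (forall env : seq (Rel A), env_fits p env -> hlit_sem env s h1 \/ hlit_sem env s h2)
  <-> hpair_forced s h1 h2.
Proof.
move=> W1 W2; split=> [Hall|Hforced env Hfit].
- by apply: NNPP => /(hpair_refuted W1 W2) [env Hfit]; apply; exact: Hall.
- exact: hpair_forced_sound Hfit W1 W2 Hforced.
Qed.

Section CnfTranslation.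
Variables (V : vocab) (A : Type) (I : interp V A) (s : nat -> A).

Definition lits_sat (C : seq (tlit V)) : Prop := exists l, List.In l C /\ tlit_sem I s l.
Definition cnf_at (phi : cnf V) : Prop := forall C, List.In C phi -> lits_sat C.

Lemma lits_sat_cat C D : lits_sat (C ++ D) <-> lits_sat C \/ lits_sat D.
Proof.
split=> [[l [Hl Hsem]]|[[l [Hl Hsem]]|[l [Hl Hsem]]]].
- by case: (List.in_app_or _ _ _ Hl) => Hin; [left|right]; exists l.
- by exists l; split=> //; apply: List.in_or_app; left.
- by exists l; split=> //; apply: List.in_or_app; right.
Qed.

Lemma cnf_at_cons C phi : cnf_at (C :: phi) <-> lits_sat C /\ cnf_at phi.
Proof.
split=> [H|[HC Hphi] D [<-|HD]]; last exact: Hphi; last by [].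
by split=> [|D HD]; apply: H; [left|right].
Qed.

Lemma cnf_at_equations (b : seq (tlit V)) eqs :
  cnf_at [seq b ++ [:: TEq V q.1 q.2] | q <- eqs] <-> lits_sat b \/ eqs_hold s eqs.
Proof.
elim: eqs => [|q eqs IH] /=; first by split=> [_|_ C []]; right=> ? [].
have Hq : lits_sat [:: TEq V q.1 q.2] <-> s q.1 = s q.2.
  by split=> [[l [[<-|[]] //]]|Eq]; exists (TEq V q.1 q.2); split; first left.
have Heqs : eqs_hold s (q :: eqs) <-> s q.1 = s q.2 /\ eqs_hold s eqs.
  by split=> [H|[Eq H] q' [<-|/H]] //; split=> [|q' Hq']; apply: H; [left|right].
rewrite cnf_at_cons lits_sat_cat Hq IH Heqs; tauto.
Qed.

Definition clause_cnf (c : clause V) : cnf V :=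
  let: (b, h1, h2) := c in
  if hpair_eqs h1 h2 is Some eqs then [seq b ++ [:: TEq V q.1 q.2] | q <- eqs]
  else [:: b].

End CnfTranslation.

Lemma clause_cnf_correct (V : vocab) (A : eqType) (I : interp V A) p s (c : clause V) :
  hlit_wf p c.1.2 -> hlit_wf p c.2 ->
  (forall env, env_fits p env -> clause_sem I env s c) <-> cnf_at I s (clause_cnf c).
Proof.
case: c => [[b h1] h2] /= W1 W2.
have -> : (forall env, env_fits p env -> clause_sem I env s (b, h1, h2)) <->
          lits_sat I s b \/ hpair_forced s h1 h2.
  rewrite -(hpair_valid s W1 W2) /clause_sem /=; split=> [H|[Hb|H] env Hfit].
  - by case: (classic (lits_sat I s b)) => Hb; [left|right=> env /H []].
  - by left.
  - by right; apply: H.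
rewrite /hpair_forced /clause_cnf; case: (hpair_eqs h1 h2) => [eqs|].
- by rewrite cnf_at_equations.
- rewrite cnf_at_cons; split=> [[Hb|[]]|[Hb _]]; last by left.
  by split=> // C [].
Qed.

(* Phi holds iff every clause holds at every assignment in every environment,
   i.e. iff the union of the clause CNFs holds at every assignment (the universe
   need not even be nonempty). *)
Theorem proposition2p1 (V : vocab) (F : sokrom V) :
  sokrom_wf F -> is_Pi11 F ->
  exists phi : cnf V,
    forall (A : finType) (I : interp V A), 0 < #|A| ->
      (sokrom_sat I F <-> cnf_sat I phi).
Proof.
move=> Hwf [_ Huniv]; exists (List.flat_map (@clause_cnf V) (clauses F)) => A I _.
rewrite /sokrom_sat universal_prefix_sem //=; split.
- move=> Hsat s C /List.in_flat_map [c [Hc HC]]; have [W1 W2] := Hwf c Hc.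
  by apply: (proj1 (clause_cnf_correct I s W1 W2)) HC => env Hfit; apply: Hsat.
- move=> Hcnf env Hfit s c Hc; have [W1 W2] := Hwf c Hc.
  apply: (proj2 (clause_cnf_correct I s W1 W2)) Hfit => C HC.
  by apply: Hcnf; apply/List.in_flat_map; exists c.
Qed.
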